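(* Consider the generalized linear model described in the context with $m=p=2$ and model matrix \[ \mathbf{X}=\begin{bmatrix}q_1(\mathbf{x}_1)&q_2(\mathbf{x}_1)\\ q_1(\mathbf{x}_2)&q_2(\mathbf{x}_2)\end{bmatrix} \] of full rank, and suppose $\nu_i>0$ for $i=1,2$. Then an allocation $\mathbf{w}_*=(w_1^*,w_2^* )^T\in S_2$ is A-optimal if and only if $w_i^*\propto\{\nu_i[q_1(\mathbf{x}_i)^2+q_2(\mathbf{x}_i)^2]\}^{-1/2}$, $i=1,2$.
   Context: Generalized linear model (GLM): independent responses $Y_i$ from a one-parameter exponential family with $E(Y_i)=\mu_i$ and $\eta_i=g(\mu_i)=\mathbf{q}(\mathbf{x}_i)^T\boldsymbol\beta$, where $g$ is the link function, $\mathbf{q}(\mathbf{x})=(q_1(\mathbf{x}),\ldots,q_p(\mathbf{x}))^T$ are predictor functions, and $\boldsymbol\beta\in\mathbb{R}^p$ is a fixed (assumed) parameter vector. Let $\nu_i=(\partial\mu_i/\partial\eta_i)^2/\mathrm{Var}(Y_i)$. Let $S_m=\{\mathbf{w}\in\mathbb{R}^m: w_i\ge0,\sum_iw_i=1\}$, $\mathbf{W}=\mathrm{diag}\{w_1\nu_1,\ldots,w_m\nu_m\}$, $f(\mathbf{w})=|\mathbf{X}^T\mathbf{W}\mathbf{X}|$, and $h(\mathbf{w})=[\mathrm{tr}((\mathbf{X}^T\mathbf{W}\mathbf{X})^{-1})]^{-1}$ if $f(\mathbf{w})>0$, $h(\mathbf{w})=0$ otherwise. An allocation is A-optimal if it maximizes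 $h$ over $S_m$. *)

(* real closed field R (needs square roots). *)
From HB Require Import structures.
From mathcomp Require Import all_boot all_order all_algebra.
Set Implicit Arguments. Unset Strict Implicit. Unset Printing Implicit Defensive.
Import Order.TTheory GRing.Theory Num.Theory.
Local Open Scope ring_scope.

Section GLM.
Variable R : rcfType.

Definition simplex (m : nat) (w : 'I_m -> R) : Prop :=
  (forall i, 0 <= w i) /\ \sum_(i < m) w i = 1.

Definition Wmat (m : nat) (nu w : 'I_m -> R) : 'M[R]_m :=
  diag_mx (\row_i (w i * nu i)).

Definition infomx (m p : nat) (X : 'M[R]_(m, p)) (nu w : 'I_m -> R) : 'M[R]_p :=
  X^T *m Wmat nu w *m X.

Definition fdet (m p : nat) (X : 'M[R]_(m, p)) (nu w : 'I_m -> R) : R :=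
  \det (infomx X nu w).

Definition hA (m p : nat) (X : 'M[R]_(m, p)) (nu w : 'I_m -> R) : R :=
  if 0 < fdet X nu w then (\tr (invmx (infomx X nu w)))^-1 else 0.

Definition A_optimal (m p : nat) (X : 'M[R]_(m, p)) (nu w : 'I_m -> R) : Prop :=
  simplex w /\ forall w' : 'I_m -> R, simplex w' -> hA X nu w' <= hA X nu w.

End GLM.

From HB Require Import structures.
From mathcomp Require Import all_boot all_order all_algebra.
From mathcomp Require Import ring.
Set Implicit Arguments. Unset Strict Implicit. Unset Printing Implicit Defensive.
Import Order.TTheory GRing.Theory Num.Theory.
Local Open Scope ring_scope.

(* For a nonsingular 2x2 model matrix, X^T W X has determinant
   w1 w2 nu1 nu2 (det X)^2 and trace w1 s1 + w2 s2, where s_i = nu_i |x_i|^2,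
   and a 2x2 matrix M satisfies tr(M^-1) = tr M / det M.  Hence on the simplex
   h(w) = F w1 w2 / (w1 s1 + w2 s2) with F = nu1 nu2 (det X)^2 (and h(w) = 0
   on the boundary).  Writing t_i = sqrt s_i, the identity
     (w1 + w2) (w1 t1^2 + w2 t2^2) = w1 w2 (t1 + t2)^2 + (w1 t1 - w2 t2)^2
   gives h(w) <= F / (t1 + t2)^2, with equality iff w1 t1 = w2 t2, that is,
   iff w_i is proportional to 1 / t_i. *)

Lemma big_ord2 (R : Type) (idx : R) (op : Monoid.law idx) (F : 'I_2 -> R) :
  \big[op/idx]_(i < 2) F i = op (F 0) (F 1).
Proof. by rewrite big_ord_recl big_ord1; congr (op _ (F _)); apply: val_inj. Qed.

Lemma ord2P (i : 'I_2) : i = 0 \/ i = 1.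
Proof. by case: i => -[|[|//]] ?; [left | right]; apply: val_inj. Qed.

Lemma mxtrace2 (R : pzRingType) (A : 'M[R]_2) : \tr A = A 0 0 + A 1 1.
Proof. exact: big_ord2. Qed.

Lemma mxtrace_adj2 (R : comNzRingType) (A : 'M[R]_2) : \tr (\adj A) = \tr A.
Proof.
rewrite !mxtrace2 !mxE /cofactor !det_mx11 !mxE /=.
have -> : lift 0 0 = 1 :> 'I_2 by exact: val_inj.
have -> : lift 1 0 = 0 :> 'I_2 by exact: val_inj.
by rewrite /= expr0 sqrrN expr1n !mul1r addrC.
Qed.

Lemma mxtrace_invmx2 (R : fieldType) (A : 'M[R]_2) :
  A \in unitmx -> \tr (invmx A) = \tr A / \det A.
Proof. by move=> A_unit; rewrite /invmx A_unit mxtraceZ mxtrace_adj2 mulrC. Qed.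

Lemma sumr_sqr_row_gt0 (R : realDomainType) n (A : 'M[R]_n) i :
  \det A != 0 -> 0 < \sum_j A i j ^+ 2.
Proof.
move=> detA; rewrite lt_def sumr_ge0 ?andbT => [|j _]; last exact: sqr_ge0.
apply: contra detA; rewrite psumr_eq0 => [/allP A_i0|j _]; last exact: sqr_ge0.
rewrite (expand_det_row _ i) big1 // => j _.
move/implyP: (A_i0 j (mem_index_enum j)).
by rewrite sqrf_eq0 => /(_ isT)/eqP->; rewrite mul0r.
Qed.

Lemma mxtrace_infomx (R : rcfType) m p (X : 'M[R]_(m, p)) (nu w : 'I_m -> R) :
  \tr (infomx X nu w) = \sum_i w i * nu i * \sum_j X i j ^+ 2.
Proof.
rewrite /infomx /Wmat mxtrace_mulC mulmxA mul_mx_diag /mxtrace.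
apply: eq_bigr => i _; rewrite !mxE mulrC; congr (_ * _).
by apply: eq_bigr => j _; rewrite mxE expr2.
Qed.

Lemma det_infomx (R : rcfType) n (X : 'M[R]_n) (nu w : 'I_n -> R) :
  fdet X nu w = (\prod_i (w i * nu i)) * \det X ^+ 2.
Proof.
rewrite /fdet /infomx /Wmat !det_mulmx det_tr det_diag.
under eq_bigr do rewrite mxE.
by rewrite mulrAC -expr2 mulrC.
Qed.

Section TwoPointCriterion.

Variables (R : rcfType) (F : R) (t : 'I_2 -> R).
Hypotheses (F_gt0 : 0 < F) (t_gt0 : forall i, 0 < t i).

Definition two_point_crit (w : 'I_2 -> R) : R :=
  if 0 < w 0 * w 1 then F * (w 0 * w 1) / (w 0 * t 0 ^+ 2 + w 1 * t 1 ^+ 2)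
  else 0.

Definition two_point_opt (i : 'I_2) : R := (t i)^-1 / ((t 0)^-1 + (t 1)^-1).

Lemma balanced_iff_proportional (w : 'I_2 -> R) :
  w 0 * t 0 = w 1 * t 1 <-> exists k, forall i, w i = k * (t i)^-1.
Proof.
split=> [balanced | [k wE]]; last by rewrite !wE !mulfVK ?gt_eqF.
exists (w 0 * t 0) => i; have [->|->] := ord2P i; last rewrite balanced;
  by rewrite mulfK ?gt_eqF.
Qed.

Lemma simplex_two_point_opt : simplex two_point_opt.
Proof.
split=> [i|]; first by rewrite divr_ge0 ?addr_ge0 ?invr_ge0 ?ltW.
by rewrite big_ord2 /= -mulrDl divff // gt_eqF // addr_gt0 ?invr_gt0.
Qed.

Lemma two_point_crit_leif w : simplex w -> 0 < w 0 * w 1 ->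
  two_point_crit w <= F / (t 0 + t 1) ^+ 2 ?= iff (w 0 * t 0 == w 1 * t 1).
Proof.
move=> [w_ge0 w_sum] w01_gt0; rewrite big_ord2 /= in w_sum.
have w_gt0 i : 0 < w i.
  rewrite lt_def w_ge0 andbT; apply: contraTneq w01_gt0.
  by have [->|->] := ord2P i => ->; rewrite ?mul0r ?mulr0 ltxx.
set D := w 0 * t 0 ^+ 2 + w 1 * t 1 ^+ 2.
have D_gt0 : 0 < D by rewrite addr_gt0 // mulr_gt0 // exprn_gt0.
have ts_gt0 : 0 < (t 0 + t 1) ^+ 2 by rewrite exprn_gt0 // addr_gt0.
have D_decomp : D = w 0 * w 1 * (t 0 + t 1) ^+ 2 + (w 0 * t 0 - w 1 * t 1) ^+ 2.
  by rewrite -[LHS]mulr1 -w_sum /D; ring.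
have D_leif : w 0 * w 1 * (t 0 + t 1) ^+ 2 <= D ?= iff (w 0 * t 0 == w 1 * t 1).
  rewrite D_decomp; split; first by rewrite lerDl sqr_ge0.
  by rewrite eq_sym -subr_eq0 addrAC subrr add0r sqrf_eq0 subr_eq0.
pose c := F / (D * (t 0 + t 1) ^+ 2).
have c_gt0 : 0 < c by rewrite divr_gt0 // mulr_gt0.
rewrite -(mono_leif (ler_pM2r c_gt0)) in D_leif.
rewrite /two_point_crit w01_gt0 -/D.
have [Dn0 tsn0] : D != 0 /\ t 0 + t 1 != 0 by rewrite !gt_eqF // addr_gt0.
have -> : F * (w 0 * w 1) / D = w 0 * w 1 * (t 0 + t 1) ^+ 2 * c.
  by rewrite /c; field; rewrite tsn0 Dn0.
by have -> : F / (t 0 + t 1) ^+ 2 = D * c by rewrite /c; field; rewrite tsn0 Dn0.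
Qed.

Lemma two_point_bound_gt0 : 0 < F / (t 0 + t 1) ^+ 2.
Proof. by rewrite divr_gt0 // exprn_gt0 // addr_gt0. Qed.

Lemma two_point_crit_le w :
  simplex w -> two_point_crit w <= F / (t 0 + t 1) ^+ 2.
Proof.
move=> sw; have [w01_gt0|] := boolP (0 < w 0 * w 1).
  exact: two_point_crit_leif.
by rewrite /two_point_crit => /negbTE->; exact: ltW two_point_bound_gt0.
Qed.

Lemma two_point_opt_gt0 i : 0 < two_point_opt i.
Proof. by rewrite divr_gt0 ?addr_gt0 ?invr_gt0. Qed.

Lemma two_point_crit_opt : two_point_crit two_point_opt = F / (t 0 + t 1) ^+ 2.
Proof.
apply/eqP; rewrite (eq_leif (two_point_crit_leif simplex_two_point_opt _)).
  by apply/eqP; rewrite /two_point_opt mulrAC [RHS]mulrAC !mulVf ?gt_eqF.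
by rewrite mulr_gt0 ?two_point_opt_gt0.
Qed.

Lemma two_point_crit_max w : simplex w ->
  (forall w', simplex w' -> two_point_crit w' <= two_point_crit w) <->
  w 0 * t 0 = w 1 * t 1.
Proof.
move=> sw; split=> [w_max | balanced w' sw'].
  have := w_max _ simplex_two_point_opt; rewrite two_point_crit_opt => le_bound.
  have w01_gt0 : 0 < w 0 * w 1.
    move: le_bound; rewrite /two_point_crit; case: ifP => // _.
    by rewrite leNgt two_point_bound_gt0.
  apply/eqP; rewrite -(eq_leif (two_point_crit_leif sw w01_gt0)).
  by rewrite eq_le le_bound two_point_crit_le.
have w01_gt0 : 0 < w 0 * w 1.
  have [k wE] := (balanced_iff_proportional w).1 balanced.
  case: (sw) => _; rewrite big_ord2 /= !wE -mulrDr => k_sum.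
  have S_gt0 : 0 < (t 0)^-1 + (t 1)^-1 by rewrite addr_gt0 ?invr_gt0.
  have k_gt0 : 0 < k by rewrite -(pmulr_lgt0 k S_gt0) k_sum.
  by rewrite !mulr_gt0 ?invr_gt0.
rewrite (eqTleif (two_point_crit_leif sw w01_gt0)); last exact/eqP.
exact: two_point_crit_le.
Qed.

End TwoPointCriterion.

Lemma hA_two_point (R : rcfType) (X : 'M[R]_2) (nu : 'I_2 -> R) :
  \det X != 0 -> (forall i, 0 < nu i) ->
  hA X nu =1 two_point_crit (nu 0 * nu 1 * \det X ^+ 2)
                (fun i => Num.sqrt (nu i * (X i 0 ^+ 2 + X i 1 ^+ 2))).
Proof.
move=> detX nu_gt0 w; set F := nu 0 * nu 1 * _.
have F_gt0 : 0 < F by apply: mulr_gt0; [exact: mulr_gt0 | rewrite exprn_even_gt0].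
have fdetE : fdet X nu w = w 0 * w 1 * F by rewrite det_infomx big_ord2 /= /F; ring.
rewrite /hA /two_point_crit fdetE pmulr_lgt0 //; case: ifP => // w01_gt0.
have M_unit : infomx X nu w \in unitmx.
  by rewrite unitmxE unitfE -/(fdet X nu w) fdetE mulf_neq0 ?gt_eqF.
rewrite mxtrace_invmx2 // invf_div -/(fdet X nu w) fdetE mxtrace_infomx.
rewrite !big_ord2 /= !sqr_sqrtr ?mulr_ge0 ?addr_ge0 ?sqr_ge0 ?ltW //.
by rewrite [w 0 * w 1 * F]mulrC !mulrA.
Qed.

Theorem corollary2 (R : rcfType) (X : 'M[R]_2) (nu : 'I_2 -> R)
    (w : 'I_2 -> R) :
  \rank X = 2%N ->
  (forall i, 0 < nu i) ->
  simplex w ->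
  (A_optimal X nu w <->
   exists k : R, forall i : 'I_2,
     w i = k * (Num.sqrt (nu i * (X i 0 ^+ 2 + X i 1 ^+ 2)))^-1).
Proof.
move=> rkX nu_gt0 sw.
have detX : \det X != 0 by rewrite -unitfE -unitmxE -row_free_unit /row_free rkX.
have F_gt0 : 0 < nu 0 * nu 1 * \det X ^+ 2.
  by apply: mulr_gt0; [exact: mulr_gt0 | rewrite exprn_even_gt0].
pose t i := Num.sqrt (nu i * (X i 0 ^+ 2 + X i 1 ^+ 2)).
have t_gt0 i : 0 < t i.
  rewrite sqrtr_gt0 mulr_gt0 //.
  by have := sumr_sqr_row_gt0 i detX; rewrite big_ord2.
apply: iff_trans (balanced_iff_proportional t_gt0 w).
apply: iff_trans (two_point_crit_max F_gt0 t_gt0 sw).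
rewrite /A_optimal; split=> [[_ w_max] w' sw' | w_max].
  by rewrite -!(hA_two_point detX nu_gt0); exact: w_max.
by split=> // w' sw'; rewrite !(hA_two_point detX nu_gt0); exact: w_max.
Qed.
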